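(* Let $H_1,\dots,H_k$ be linear subspaces of $\mathbb{R}^n$ with $1\le\dim H_j\le n-2$ for $j=1,\dots,k$. The following statements are equivalent. (i) $H_1^\perp+\cdots+H_k^\perp=\mathbb{R}^n$, and $\{H_1^\perp,\dots,H_k^\perp\}$ cannot be partitioned into two nonempty subsets such that every subspace in one is orthogonal to every subspace in the other. (ii) If $E\subset S^{n-1}$ is nonempty and closed, and for each $j=1,\dots,k$ and each $x\in E$ we have $S^{n-1}\cap(H_j^\perp+x)\subset E$, then $E=S^{n-1}$. (iii) If $F\subset\mathbb{R}^n$ is closed and invariant under every rotation that fixes $H_j$, for each $j=1,\dots,k$, then $F$ is a union of spheres centered at the origin. (iv) If $K$ is a convex body in $\mathbb{R}^n$ that is rotationally symmetric with respect to $H_j$ for each $j=1,\dots,k$, then $K$ is a ball centered at the origin.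
   Context: $H^\perp$ is the orthogonal complement of $H$; $S^{n-1}$ is the unit sphere. A rotation fixing $H$ is an element of $SO(n)$ acting as the identity on $H$. A set $X$ is rotationally symmetric with respect to an $i$-dimensional subspace $H$ if for every $x\in H$, $X\cap(H^\perp+x)$ is a union of $(n-i-1)$-dimensional spheres each centered at $x$ (equivalently, $X$ is invariant under every element of $SO(n)$ fixing $H$ pointwise). A convex body is a compact convex set with nonempty interior. *)

(* R^n is modelled as the row vectors 'rV[R]_n over an arbitrary real
   field R : realType; linear subspaces are row spaces of square matrices
   (mxalgebra, %MS).  Points act on the right: x |-> x *m Q. *)
From HB Require Import structures.
From mathcomp Require Import all_boot all_order all_algebra.
From mathcomp Require Import all_classical all_reals all_analysis.
Set Implicit Arguments. Unset Strict Implicit. Unset Printing Implicit Defensive.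
Import Order.TTheory GRing.Theory Num.Theory.
Local Open Scope classical_set_scope.
Local Open Scope ring_scope.

Definition dotv (R : realType) (n : nat) (u v : 'rV[R]_n) : R := (u *m v^T) 0 0.

Definition perp (R : realType) (n : nat) (H : 'M[R]_n) : 'M[R]_n := kermx H^T.

Definition orthsp (R : realType) (n : nat) (A B : 'M[R]_n) : Prop :=
  forall u v : 'rV[R]_n, (u <= A)%MS -> (v <= B)%MS -> dotv u v = 0.

Definition sphere (R : realType) (n : nat) : set 'rV[R]_n :=
  [set x | dotv x x = 1].

Definition rotation (R : realType) (n : nat) (Q : 'M[R]_n) : Prop :=
  Q *m Q^T = 1%:M /\ \det Q = 1.

Definition fixes (R : realType) (n : nat) (Q H : 'M[R]_n) : Prop :=
  forall v : 'rV[R]_n, (v <= H)%MS -> v *m Q = v.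

(* X is rotationally symmetric with respect to the subspace H:
   for every x in H, X ∩ (H^⊥ + x) is a union of spheres (in x + H^⊥)
   centered at x, i.e. membership of y ∈ x + H^⊥ in X only depends on |y - x|. *)
Definition rot_symmetric (R : realType) (n : nat) (H : 'M[R]_n)
    (X : set 'rV[R]_n) : Prop :=
  forall x y z : 'rV[R]_n, (x <= H)%MS ->
    (y - x <= perp H)%MS -> (z - x <= perp H)%MS ->
    dotv (y - x) (y - x) = dotv (z - x) (z - x) -> X y -> X z.

(* topology on R^n: the product (matrix) topology of R, which coincides with
   the Euclidean one; the cast to R^o is only needed for instance inference *)
Definition convex_body (R : realType) (n : nat) (K : set 'rV[R]_n) : Prop :=
  compact (K : set 'rV[R^o]_n) /\ convex_set (K : set (convex_lmodType 'rV[R]_n)) /\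
  (K : set 'rV[R^o]_n)° !=set0.

From HB Require Import structures.
From mathcomp Require Import all_boot all_order all_algebra.
From mathcomp Require Import all_classical all_reals all_analysis.
Import Order.TTheory GRing.Theory Num.Theory.
Local Open Scope classical_set_scope.
Local Open Scope ring_scope.
From mathcomp Require Import zify ring lra.
Set Implicit Arguments. Unset Strict Implicit. Unset Printing Implicit Defensive.

(* The sets in (ii) and (iii) are invariant under the reflections s_e in the
   nonzero vectors e of the spaces H_j^perp: for (iii) because s_e agrees at any
   given point with a rotation fixing H_j.  The directions whose reflection leaves
   such a set invariant are stable under e |-> e s_f.  If a subspace U of dimension
   >= 2 consists of such directions and f is such a direction neither in U nor
   orthogonal to U, composing reflections in vectors of U and in vectors
   p' + q (p' in U, q the component of f orthogonal to U) shows that all of U + Rf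
   consists of such directions.  Under (i) this process starts from some H_j^perp
   and reaches R^n, and reflections in all directions act transitively on spheres.
   A radial convex body is a ball, giving (iv).  Conversely, if (i) fails there is a
   subspace W with W and W^perp nonzero such that every H_j^perp lies in W or is
   orthogonal to W; then S^{n-1} cap W^perp contradicts (ii), and the cylinder
   {y : |P_W y| <= 1, |y - P_W y| <= 1} contradicts (iv). *)

Section InnerProduct.
Variables (R : realType) (n : nat).
Implicit Types (u v w x y : 'rV[R]_n) (a : R).

Lemma dotvE u v : dotv u v = \sum_i u 0 i * v 0 i.
Proof. by rewrite /dotv !mxE; apply: eq_bigr => i _; rewrite mxE. Qed.

Lemma dotvC u v : dotv u v = dotv v u.
Proof. by rewrite !dotvE; apply: eq_bigr => i _; rewrite mulrC. Qed.

Lemma dotvDl u v w : dotv (u + v) w = dotv u w + dotv v w.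
Proof. by rewrite !dotvE -big_split; apply: eq_bigr => i _; rewrite mxE mulrDl. Qed.

Lemma dotvZl a u v : dotv (a *: u) v = a * dotv u v.
Proof. by rewrite !dotvE mulr_sumr; apply: eq_bigr => i _; rewrite mxE mulrA. Qed.

Lemma dotvBl u v w : dotv (u - v) w = dotv u w - dotv v w.
Proof. by rewrite dotvDl -scaleN1r dotvZl mulN1r. Qed.

Lemma dotvDr u v w : dotv w (u + v) = dotv w u + dotv w v.
Proof. by rewrite !(dotvC w) dotvDl. Qed.

Lemma dotvZr a u v : dotv v (a *: u) = a * dotv v u.
Proof. by rewrite !(dotvC v) dotvZl. Qed.

Lemma dotvBr u v w : dotv w (u - v) = dotv w u - dotv w v.
Proof. by rewrite !(dotvC w) dotvBl. Qed.

Lemma dotvZZ a u : dotv (a *: u) (a *: u) = a ^+ 2 * dotv u u.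
Proof. by rewrite dotvZl dotvZr mulrA -expr2. Qed.

Lemma dotv0l v : dotv 0 v = 0.
Proof. by rewrite -(scale0r 0) dotvZl mul0r. Qed.

Lemma dotv0r v : dotv v 0 = 0.
Proof. by rewrite dotvC dotv0l. Qed.

Lemma dotv_ge0 u : 0 <= dotv u u.
Proof. by rewrite dotvE; apply: sumr_ge0 => i _; rewrite -expr2 sqr_ge0. Qed.

Lemma dotv_eq0 u : (dotv u u == 0) = (u == 0).
Proof.
apply/idP/idP => [|/eqP->]; last by rewrite dotv0l.
rewrite dotvE psumr_eq0 => [/allP u0|i _]; last by rewrite -expr2 sqr_ge0.
apply/eqP/rowP => i; rewrite mxE.
by have /implyP/(_ isT) := u0 i (mem_index_enum _); rewrite mulf_eq0 orbb => /eqP.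
Qed.

Lemma dotv_gt0 u : u != 0 -> 0 < dotv u u.
Proof. by move=> u0; rewrite lt_neqAle dotv_ge0 eq_sym dotv_eq0 u0. Qed.

Lemma dotv_mulmx u v (A : 'M[R]_n) : dotv (u *m A) v = dotv u (v *m A^T).
Proof. by rewrite /dotv trmx_mul trmxK mulmxA. Qed.

Lemma dotv_pyth u v : dotv u v = 0 -> dotv (u + v) (u + v) = dotv u u + dotv v v.
Proof. by move=> uv; rewrite dotvDl !dotvDr (dotvC v u) uv addr0 add0r. Qed.

Lemma sqr_coord_le_dotv u i : u 0 i ^+ 2 <= dotv u u.
Proof.
rewrite dotvE (bigD1 i) //= -expr2 lerDl.
by apply: sumr_ge0 => j _; rewrite -expr2 sqr_ge0.
Qed.

Lemma dotv_conv_le1 u v a : 0 <= a <= 1 -> dotv u u <= 1 -> dotv v v <= 1 ->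
  dotv (a *: u + (1 - a) *: v) (a *: u + (1 - a) *: v) <= 1.
Proof.
move=> /andP[a0 a1] uu vv.
have uv : 2 * dotv u v <= dotv u u + dotv v v.
  by have := dotv_ge0 (u - v); rewrite dotvBl !dotvBr (dotvC v u); lra.
rewrite dotvDl !dotvDr !dotvZl !dotvZr (dotvC v u).
have h1 : a * dotv u u <= a by rewrite -[leRHS]mulr1 ler_wpM2l.
have h2 : (1 - a) * dotv v v <= 1 - a by rewrite -[leRHS]mulr1 ler_wpM2l // subr_ge0.
have h3 : 0 <= a * (1 - a) * (dotv u u + dotv v v - 2 * dotv u v).
  by rewrite !mulr_ge0 ?subr_ge0.
lra.
Qed.

End InnerProduct.

Section OrthogonalComplement.
Variables (R : realType) (n : nat).
Implicit Types (u v w x : 'rV[R]_n) (A B U : 'M[R]_n).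

Lemma perpP A v : reflect (forall w, (w <= A)%MS -> dotv v w = 0) (v <= perp A)%MS.
Proof.
apply: (iffP sub_kermxP) => [vA w /submxP[D ->]|vA].
  by rewrite dotvC dotv_mulmx vA dotv0r.
apply/rowP => i; rewrite [RHS]mxE -(vA _ (row_sub i A)) /dotv !mxE.
by apply: eq_bigr => j _; rewrite !mxE.
Qed.

Lemma orthsp_sym A B : orthsp A B -> orthsp B A.
Proof. by move=> AB u v uB vA; rewrite dotvC AB. Qed.

Lemma orthspE A B : orthsp A B <-> (B <= perp A)%MS.
Proof.
split=> [AB|BA u v uA vB].
  by apply/row_subP => i; apply/perpP => w wA; rewrite dotvC AB ?row_sub.
by rewrite dotvC; move/perpP: (submx_trans vB BA); apply.
Qed.

Lemma capmx_perp A : (A :&: perp A = 0)%MS.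
Proof.
apply/eqP; rewrite -submx0; apply/rV_subP => v; rewrite sub_capmx submx0.
by case/andP=> vA /perpP/(_ v vA)/eqP; rewrite dotv_eq0.
Qed.

Lemma mxrank_perp A : \rank (perp A) = (n - \rank A)%N.
Proof. by rewrite mxrank_ker mxrank_tr. Qed.

Lemma addsmx_perp_full A : row_full (A + perp A)%MS.
Proof.
apply/eqP; have := mxrank_sum_cap A (perp A).
by rewrite capmx_perp mxrank0 addn0 mxrank_perp subnKC ?rank_leq_col.
Qed.

Lemma perp_decomp A v : exists a b, [/\ (a <= A)%MS, (b <= perp A)%MS & v = a + b].
Proof.
have /sub_addsmxP[[a b] /= ->] : (v <= A + perp A)%MS.
  exact/submx_full/addsmx_perp_full.
by exists (a *m A), (b *m perp A); rewrite !submxMl.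
Qed.

Lemma exists_sub_orth U x : (2 <= \rank U)%N -> exists v, [/\ (v <= U)%MS, v != 0 & dotv v x = 0].
Proof.
move=> rU; pose K := kermx x^T.
have rK : (n <= \rank K + 1)%N.
  by rewrite mxrank_ker mxrank_tr; have := rank_leq_row x; lia.
have /rowV0Pn[v] : (U :&: K)%MS != 0.
  rewrite -mxrank_eq0 -lt0n.
  by have := mxrank_sum_cap U K; have := rank_leq_col (U + K)%MS; lia.
rewrite sub_capmx => /andP[vU /sub_kermxP vK] v0.
by exists v; split => //; rewrite /dotv vK mxE.
Qed.

Lemma exists_unit_sub A : A != 0 -> exists2 v, (v <= A)%MS & dotv v v = 1.
Proof.
case/rowV0Pn => v vA v0; set c := (Num.sqrt (dotv v v))^-1.
exists (c *: v); first exact: scalemx_sub.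
rewrite dotvZZ exprVn sqr_sqrtr ?dotv_ge0 // mulVf //.
by rewrite dotv_eq0.
Qed.

Lemma exists_sub_dotv U u a m : (2 <= \rank U)%N -> (u <= U)%MS -> 0 < a ->
  m ^+ 2 <= a * dotv u u -> exists p, [/\ (p <= U)%MS, dotv p p = a & dotv u p = m].
Proof.
move=> rU uU a0 mu; have [v [vU v0 vu]] := exists_sub_orth u rU.
have vv := dotv_gt0 v0; set l := m / dotv u u.
have hl : 0 <= a - l ^+ 2 * dotv u u.
  have [->|u0] := eqVneq u 0; first by rewrite dotv0l mulr0 subr0 ltW.
  have uu := dotv_gt0 u0.
  have -> : l ^+ 2 * dotv u u = m ^+ 2 / dotv u u by rewrite /l; field; rewrite gt_eqF.
  by rewrite subr_ge0 ler_pdivrMr.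
set c := Num.sqrt ((a - l ^+ 2 * dotv u u) / dotv v v).
have c2 : c ^+ 2 * dotv v v = a - l ^+ 2 * dotv u u.
  by rewrite sqr_sqrtr ?divfK ?gt_eqF // divr_ge0 // ltW.
exists (l *: u + c *: v); split.
- by rewrite addmx_sub ?scalemx_sub.
- by rewrite dotv_pyth ?dotvZZ ?c2 ?subrKC // dotvZl dotvZr dotvC vu !mulr0.
- rewrite dotvDr !dotvZr (dotvC u v) vu mulr0 addr0 /l.
  move: mu; have [->|u0] := eqVneq u 0; last by rewrite divfK // gt_eqF // dotv_gt0.
  rewrite !dotv0l !mulr0 => m0; apply/esym/eqP.
  by rewrite -sqrf_eq0 eq_le sqr_ge0 andbT.
Qed.

Lemma exists_notin_nonorth U A : ~~ (A <= U)%MS -> ~ orthsp A U ->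
  exists f, [/\ (f <= A)%MS, ~~ (f <= U)%MS & exists2 w, (w <= U)%MS & dotv f w != 0].
Proof.
move=> AU /existsNP[v /existsNP[w]] /not_implyP[vA /not_implyP[wU /eqP vw]].
have [i v1U] := row_subPn AU; set v1 := row i A in v1U; have v1A := row_sub i A.
have [vU|vU] := boolP (v <= U)%MS; last by exists v; split=> //; exists w.
have [[w1 w1U v1w1]|v1_orth] := pselect (exists2 w1, (w1 <= U)%MS & dotv v1 w1 != 0).
  by exists v1; split=> //; exists w1.
exists (v1 + v); split; first by rewrite addmx_sub.
  by apply: contraNN v1U => v1vU; rewrite -(addrK v v1) addmx_sub ?eqmx_opp.
have v1w : dotv v1 w = 0.
  by apply/eqP; apply: contraT => v1w; case: v1_orth; exists w.
by exists w => //; rewrite dotvDl v1w add0r.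
Qed.

End OrthogonalComplement.

Section Reflection.
Variables (R : realType) (n : nat).
Implicit Types (x y e f : 'rV[R]_n).

Definition reflmx e : 'M[R]_n := 1%:M - (2 / dotv e e) *: (e^T *m e).

Lemma mx11_mulmx (a : 'M[R]_1) (e : 'rV[R]_n) : a *m e = a 0 0 *: e.
Proof. by rewrite {1}[a]mx11_scalar mul_scalar_mx. Qed.

Lemma mulmx_rV_inj (A B : 'M[R]_n) : (forall x : 'rV[R]_n, x *m A = x *m B) -> A = B.
Proof. by move=> AB; apply/row_matrixP => i; rewrite !rowE AB. Qed.

Lemma mul_reflmx x e : x *m reflmx e = x - (2 * dotv x e / dotv e e) *: e.
Proof.
rewrite /reflmx mulmxBr mulmx1 -scalemxAr mulmxA mx11_mulmx scalerA.
by rewrite -/(dotv x e) mulrAC.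
Qed.

Lemma tr_reflmx e : (reflmx e)^T = reflmx e.
Proof. by rewrite /reflmx linearB /= linearZ /= trmx1 trmx_mul trmxK. Qed.

Lemma dotv_reflmx x e : e != 0 -> dotv (x *m reflmx e) (x *m reflmx e) = dotv x x.
Proof.
move=> e0; have ee := dotv_gt0 e0.
rewrite mul_reflmx dotvBl !dotvBr !dotvZl !dotvZr (dotvC e x).
by field; rewrite gt_eqF.
Qed.

Lemma reflmxK e : e != 0 -> reflmx e *m reflmx e = 1%:M.
Proof.
move=> e0; have ee := dotv_gt0 e0; apply: mulmx_rV_inj => x.
rewrite mulmx1 mulmxA !mul_reflmx dotvBl dotvZl -addrA -opprD -scalerDl.
suff -> : 2 * dotv x e / dotv e e + 2 * (dotv x e - 2 * dotv x e / dotv e e * dotv e e)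
  / dotv e e = 0 by rewrite scale0r subr0.
by field; rewrite gt_eqF.
Qed.

Lemma reflmx_orth x e : dotv x e = 0 -> x *m reflmx e = x.
Proof. by move=> xe; rewrite mul_reflmx xe mulr0 mul0r scale0r subr0. Qed.

Lemma reflmx_swap x y : dotv x x = dotv y y -> x != y -> x *m reflmx (x - y) = y.
Proof.
move=> xy; rewrite -subr_eq0 => xy0.
have xyxy : dotv (x - y) (x - y) = 2 * dotv x (x - y).
  by rewrite dotvBl !dotvBr xy (dotvC y x); ring.
rewrite mul_reflmx -xyxy divff ?scale1r ?opprB ?subrKC //.
by rewrite dotv_eq0.
Qed.

Lemma reflmx_conj e f : f != 0 -> reflmx (e *m reflmx f) = reflmx f *m reflmx e *m reflmx f.
Proof.
move=> f0; apply: mulmx_rV_inj => x.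
rewrite !mulmxA [x *m reflmx f *m reflmx e]mul_reflmx mulmxBl -scalemxAl.
rewrite -mulmxA reflmxK // mulmx1 mul_reflmx dotv_reflmx //.
by rewrite dotv_mulmx tr_reflmx.
Qed.

Lemma det_reflmx e : e != 0 -> \det (reflmx e) = -1.
Proof.
move=> e0; have ee := dotv_gt0 e0; set c := 2 / dotv e e.
pose A : 'M[R]_(n, 1) := c *: e^T.
pose M := block_mx (1%:M : 'M[R]_n) A e (1%:M : 'M[R]_1).
have detM_refl : \det M = \det (reflmx e).
  have -> : M = block_mx (1%:M - A *m e) A 0 1%:M *m block_mx 1%:M 0 e 1%:M.
    by rewrite mulmx_block ?mul1mx ?mul0mx ?mulmx0 ?mulmx1 ?addr0 ?add0r subrK.
  by rewrite det_mulmx det_lblock det_ublock !det1 !mulr1 /reflmx /A scalemxAl.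
have detM_scalar : \det M = \det (1%:M - e *m A : 'M[R]_1).
  have -> : M = block_mx 1%:M 0 e 1%:M *m block_mx 1%:M A 0 (1%:M - e *m A).
    by rewrite mulmx_block ?mul1mx ?mul0mx ?mulmx0 ?mulmx1 ?addr0 ?add0r addrC subrK.
  by rewrite det_mulmx det_lblock det_ublock !det1 !mul1r.
have eA : e *m A = (c * dotv e e)%:M.
  by rewrite /A -scalemxAr {1}[e *m e^T]mx11_scalar scale_scalar_mx.
rewrite -detM_refl detM_scalar eA [_ - _]mx11_scalar det_scalar1 !mxE eqxx /= mulr1n.
by rewrite /c divfK ?gt_eqF //; lra.
Qed.

Lemma rotation_reflmxM e f : e != 0 -> f != 0 -> rotation (reflmx e *m reflmx f).
Proof.
move=> e0 f0; split; last by rewrite det_mulmx !det_reflmx // mulrNN mulr1.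
rewrite trmx_mul !tr_reflmx mulmxA -(mulmxA (reflmx e)) reflmxK // mulmx1.
exact: reflmxK.
Qed.

Lemma fixes_reflmx (H : 'M[R]_n) e : (e <= perp H)%MS -> fixes (reflmx e) H.
Proof. by move=> /perpP eH v vH; rewrite reflmx_orth // dotvC eH. Qed.

End Reflection.

Section Generation.
Variables (R : realType) (n : nat) (P : 'rV[R]_n -> Prop).
Hypothesis P_reflmx : forall e f, e != 0 -> f != 0 -> P e -> P f -> P (e *m reflmx f).

Definition good_on (U : 'M[R]_n) := forall u, (u <= U)%MS -> u != 0 -> P u.

Section Extension.
Variable U : 'M[R]_n.
Hypotheses (U_good : good_on U) (U_rank : (2 <= \rank U)%N).
Implicit Types (p q u : 'rV[R]_n) (a t : R).

Definition good_shell a q := forall p, (p <= U)%MS -> dotv p p = a -> P (p + q).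

Definition good_ext q := forall u t, (u <= U)%MS -> u + t *: q != 0 -> P (u + t *: q).

Lemma good_extZ q t : t != 0 -> good_ext (t *: q) -> good_ext q.
Proof.
move=> t0 tq_good u s uU usq0.
by rewrite -[s](divfK t0) -scalerA; apply: tq_good; rewrite // scalerA divfK.
Qed.

(* Reflecting [u + t q] in the good vector [p + q] lands on [u - t p], inside [U]. *)
Lemma good_shell_reflect a q u t p : (q <= perp U)%MS -> good_shell a q -> 0 < a ->
  (u <= U)%MS -> u + t *: q != 0 -> (p <= U)%MS -> dotv p p = a ->
  2 * dotv u p = t * (a - dotv q q) -> P (u + t *: q).
Proof.
move=> /perpP qU shell a0 uU utq0 pU pp up.
have [qp qu] := (qU p pU, qU u uU).
have ff : dotv (p + q) (p + q) = a + dotv q q by rewrite dotv_pyth ?pp // dotvC.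
have f0 : p + q != 0 by rewrite -dotv_eq0 ff gt_eqF // ltr_wpDr ?dotv_ge0.
have refl_utq : (u + t *: q) *m reflmx (p + q) = u - t *: p.
  rewrite mul_reflmx ff dotvDl !dotvDr !dotvZl (dotvC u q) qu qp mulr0 !addr0 add0r.
  have -> : 2 * (dotv u p + t * dotv q q) / (a + dotv q q) = t.
    by rewrite mulrDr up; field; rewrite gt_eqF // ltr_wpDr ?dotv_ge0.
  by rewrite scalerDr opprD addrACA subrr addr0.
have utp0 : u - t *: p != 0 by rewrite -dotv_eq0 -refl_utq dotv_reflmx // dotv_eq0.
rewrite -[u + t *: q]mulmx1 -(reflmxK f0) mulmxA refl_utq.
by apply: P_reflmx => //; [apply: U_good; rewrite ?addmx_sub ?eqmx_opp ?scalemx_sub | apply: shell].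
Qed.

Lemma good_shell_scale a q t a' : (q <= perp U)%MS -> good_shell a q -> 0 < a -> 0 < a' ->
  t ^+ 2 * (a - dotv q q) ^+ 2 <= 4 * a * a' -> good_shell a' (t *: q).
Proof.
move=> qU shell a0 a'0 ta' u uU uu.
have uq : dotv u q = 0 by rewrite dotvC; move/perpP: qU; apply.
have [|p [pU pp up]] := @exists_sub_dotv _ _ U u a (t * (a - dotv q q) / 2) U_rank uU a0.
  by rewrite uu expr_div_n ler_pdivrMr ?exprn_gt0 // exprMn; lra.
apply: (good_shell_reflect qU shell) pU pp _ => //; last by rewrite up; field.
rewrite -dotv_eq0 dotv_pyth; last by rewrite dotvZr uq mulr0.
by rewrite dotvZZ uu gt_eqF //; have := mulr_ge0 (sqr_ge0 t) (dotv_ge0 q); lra.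
Qed.

Lemma good_ext_of_shell a q : (q <= perp U)%MS -> good_shell a q -> 0 < a ->
  dotv q q = a -> good_ext q.
Proof.
move=> qU shell a0 qq u s uU usq0.
have [|p [pU pp up]] := @exists_sub_dotv _ _ U u a 0 U_rank uU a0.
  by rewrite expr0n mulr_ge0 ?dotv_ge0 ?ltW.
by apply: (good_shell_reflect qU shell) pU pp _; rewrite // up qq subrr !mulr0.
Qed.

Lemma good_ext_close a q : (q <= perp U)%MS -> good_shell a q -> 0 < a -> q != 0 ->
  (a - dotv q q) ^+ 2 <= 4 * a * dotv q q -> good_ext q.
Proof.
move=> qU shell a0 q0 close; have b0 := dotv_gt0 q0; set b := dotv q q in close b0.
set t := Num.sqrt (a / b); have ab0 : 0 < a / b by rewrite divr_gt0.
have t2 : t ^+ 2 = a / b by rewrite sqr_sqrtr ?ltW.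
have t0 : t != 0 by rewrite gt_eqF ?sqrtr_gt0.
apply: (good_extZ t0); apply: (@good_ext_of_shell a) => //.
- by rewrite scalemx_sub.
- apply: (good_shell_scale qU shell a0 a0); rewrite t2 -/b mulrAC ler_pdivrMr //.
  by have := ler_wpM2l (ltW a0) close; nra.
- by rewrite dotvZZ t2 divfK ?gt_eqF.
Qed.

(* This rescaling changes the ratio [a / b] into [(a - b)^2 / (4 a b)], which is
   still at least 1 but at most a quarter of [a / b]. *)
Lemma good_shell_descent a q (b := dotv q q) (t := 2 * a / (a - b)) :
  (q <= perp U)%MS -> good_shell a q -> 0 < a -> 4 * a * b < (a - b) ^+ 2 ->
  [/\ t != 0, good_shell a (t *: q), dotv (t *: q) (t *: q) <= a &
      dotv (t *: q) (t *: q) * (a - b) ^+ 2 = 4 * a ^+ 2 * b].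
Proof.
move=> qU shell a0 far; have b0 : 0 <= b := dotv_ge0 q.
have ab0 : a - b != 0 by apply: contraTneq far => ->; rewrite expr0n /= -leNgt; nra.
have d0 : 0 < (a - b) ^+ 2 by rewrite exprn_even_gt0.
have bE : dotv (t *: q) (t *: q) * (a - b) ^+ 2 = 4 * a ^+ 2 * b.
  by rewrite dotvZZ /t /b; field.
split=> //.
- by rewrite mulf_neq0 ?invr_eq0 // mulf_neq0 // gt_eqF.
- apply: (good_shell_scale qU shell a0 a0).
  by rewrite /t /b expr_div_n divfK ?expf_neq0 //; lra.
- by rewrite -(ler_pM2r d0) bE; nra.
Qed.

Lemma good_ext_bounded a N : 0 < a -> forall q, (q <= perp U)%MS -> good_shell a q ->
  q != 0 -> dotv q q <= a <= N%:R * dotv q q -> good_ext q.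
Proof.
move=> a0; elim: N => [|N IH] q qU shell q0 /andP[ba aN]; first by move: aN; lra.
have [close|far] := lerP ((a - dotv q q) ^+ 2) (4 * a * dotv q q).
  exact: good_ext_close close.
have [t0 tshell b'a b'E] := good_shell_descent qU shell a0 far.
apply: (good_extZ t0); apply: (IH _ _ tshell); first by rewrite scalemx_sub.
  by rewrite scaler_eq0 negb_or t0.
rewrite b'a /=; move: b'E far aN ba (dotv_gt0 q0).
set b' := dotv _ _; set b := dotv q q => b'E far aN ba b0.
have d0 : 0 < (a - b) ^+ 2 by apply: le_lt_trans far; rewrite !mulr_ge0 ?ltW.
have N_ge0 : 0 <= N%:R :> R by [].
have ab : (a - b) ^+ 2 <= 4 * N%:R * a * b.
  by move: aN; rewrite -natr1 mulrDl mul1r; nra.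
by rewrite -(ler_pM2r d0) -mulrA b'E; nra.
Qed.

Lemma good_ext_le a q : (q <= perp U)%MS -> good_shell a q -> 0 < a -> q != 0 ->
  dotv q q <= a -> good_ext q.
Proof.
move=> qU shell a0 q0 ba; have b0 := dotv_gt0 q0.
apply: (@good_ext_bounded a (Num.bound (a / dotv q q))) => //; rewrite ba /=.
by rewrite -ler_pdivrMr // ltW // archi_boundP // divr_ge0 ?ltW.
Qed.

Lemma good_shell_ext a q : (q <= perp U)%MS -> good_shell a q -> 0 < a -> q != 0 ->
  good_ext q.
Proof.
move=> qU shell a0 q0; have [ba|ab] := lerP (dotv q q) a.
  exact: good_ext_le qU shell a0 q0 ba.
have [close|far] := lerP ((a - dotv q q) ^+ 2) (4 * a * dotv q q).
  exact: good_ext_close close.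
have [t0 tshell b'a _] := good_shell_descent qU shell a0 far.
apply: (good_extZ t0); apply: good_ext_le tshell _ _ b'a; rewrite ?scalemx_sub //.
by rewrite scaler_eq0 negb_or t0.
Qed.

(* Reflections in [p - p'] move [p + q] to every [p' + q] with [|p'| = |p|]. *)
Lemma good_on_addsmx f : P f -> ~~ (f <= U)%MS ->
  (exists2 w, (w <= U)%MS & dotv f w != 0) -> good_on (U + f)%MS.
Proof.
move=> Pf fU [w wU fw]; have [p [q [pU qU fE]]] := perp_decomp U f; subst f.
have q_orth v : (v <= U)%MS -> dotv q v = 0 by move/perpP: qU; apply.
have q0 : q != 0 by apply: contraNneq fU => ->; rewrite addr0.
have p0 : p != 0 by apply: contraNneq fw => ->; rewrite add0r q_orth.
have f0 : p + q != 0 by apply: contraNneq fU => ->; rewrite sub0mx.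
have shell : good_shell (dotv p p) q.
  move=> p' p'U pp'; have [<- //|pp'0] := eqVneq p p'.
  have pp'U : (p - p' <= U)%MS by rewrite addmx_sub ?eqmx_opp.
  have -> : p' + q = (p + q) *m reflmx (p - p').
    by rewrite mulmxDl reflmx_swap // reflmx_orth // q_orth.
  by apply: P_reflmx => //; [rewrite subr_eq0 | apply: U_good; rewrite // subr_eq0].
have ext := good_shell_ext qU shell (dotv_gt0 p0) q0.
move=> g /sub_addsmxP[[u1 u2] /= ->] g0.
rewrite mx11_mulmx scalerDr addrA; apply: ext.
  by rewrite addmx_sub ?submxMl ?scalemx_sub.
by rewrite -addrA -scalerDr -mx11_mulmx.
Qed.

End Extension.
End Generation.

Definition radial (R : realType) (n : nat) (X : set 'rV[R]_n) :=
  forall x y, X x -> dotv y y = dotv x x -> X y.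

Section Connected.
Variables (R : realType) (n k : nat) (V : 'I_k -> 'M[R]_n).

Definition orth_split := exists A : {set 'I_k}, A != finset.set0 /\ ~: A != finset.set0 /\
  forall i j, i \in A -> j \notin A -> orthsp (V i) (V j).

Definition span_connected := row_full (\sum_j V j)%MS /\ ~ orth_split.

Lemma not_span_connected_split : (0 < k)%N -> (forall j, V j != 0) -> ~ span_connected ->
  exists W, [/\ W != 0, perp W != 0 & forall j, (V j <= W)%MS \/ orthsp (V j) W].
Proof.
move=> k0 V0 /not_andP[Vnfull|/contrapT[A [/set0Pn[i0 i0A] [/set0Pn[j0 j0A] AV]]]].
  pose W := (\sum_j V j)%MS; exists W; split.
  - apply: contraNneq (V0 (Ordinal k0)) => W0; rewrite -submx0 -W0.
    exact: (sumsmx_sup (Ordinal k0)).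
  - rewrite -mxrank_eq0 mxrank_perp subn_eq0 col_leq_rank.
    by move/negP: Vnfull.
  - by move=> j; left; apply: (sumsmx_sup j).
pose W := (\sum_(i in A) V i)%MS.
have AW j : j \notin A -> orthsp (V j) W.
  move=> jA; apply/orthspE/sumsmx_subP => i iA.
  exact/orthspE/orthsp_sym/AV.
exists W; split.
- apply: contraNneq (V0 i0) => W0; rewrite -submx0 -W0; exact: (sumsmx_sup i0).
- rewrite inE in j0A; apply: contraNneq (V0 j0) => W0; rewrite -submx0 -W0.
  exact/orthspE/orthsp_sym/AW.
- by move=> j; have [jA|jA] := boolP (j \in A); [left; apply: (sumsmx_sup j) | right; apply: AW].
Qed.

Section Generated.
Hypotheses (V_rank : forall j, (2 <= \rank (V j))%N) (V_conn : span_connected).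

Lemma exists_nonorth_escape U : (exists j, (V j <= U)%MS) -> ~~ row_full U ->
  exists j, ~~ (V j <= U)%MS /\ ~ orthsp (V j) U.
Proof.
move=> [j0 j0U] Unfull; apply: contrapT => no_escape.
have VU j : ~~ (V j <= U)%MS -> orthsp (V j) U.
  by move=> jU; apply: contrapT => jo; apply: no_escape; exists j.
case: V_conn => Vfull; apply; exists [set j | (V j <= U)%MS]%SET; split.
  by apply/set0Pn; exists j0; rewrite inE.
split=> [|i j]; last first.
  by rewrite !inE => iU /VU/orthspE jU; apply/orthsp_sym/orthspE/(submx_trans iU jU).
apply: contraNneq Unfull => /setP A_all; rewrite -sub1mx.
apply: submx_trans (_ : (\sum_j V j <= U)%MS); first by rewrite sub1mx.
by apply/sumsmx_subP => j _; have := A_all j; rewrite !inE => /negbFE.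
Qed.

Variable P : 'rV[R]_n -> Prop.
Hypotheses (P_reflmx : forall e f, e != 0 -> f != 0 -> P e -> P f -> P (e *m reflmx f))
           (P_V : forall j, good_on P (V j)).

Lemma good_all : (0 < k)%N -> forall e, e != 0 -> P e.
Proof.
move=> k0 e e0; pose j0 := Ordinal k0.
suff grow d U : (n - \rank U <= d)%N -> good_on P U -> (2 <= \rank U)%N ->
    (exists j, (V j <= U)%MS) -> P e.
  by apply: (grow n (V j0)); rewrite ?leq_subr //; exists j0.
elim: d U => [|d IH] U dU Ugood Urank [j1 j1U];
  (have [Ufull|Unfull] := boolP (row_full U); first exact: Ugood (submx_full _ Ufull) e0).
  by move: Unfull; rewrite -col_leq_rank -subn_eq0 -leqn0 dU.
have [j [jU jo]] := exists_nonorth_escape (ex_intro _ j1 j1U) Unfull.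
have [f [fj fU fw]] := exists_notin_nonorth jU jo.
have f0 : f != 0 by apply: contraNneq fU => ->; rewrite sub0mx.
have UUf : (U <= U + f)%MS := addsmxSl U f.
have rank_lt : (\rank U < \rank (U + f)%MS)%N.
  by rewrite rank_ltmx // ltmxE UUf /=; apply: contraNN fU; apply: submx_trans (addsmxSr U f).
apply: IH (good_on_addsmx P_reflmx Ugood Urank (P_V fj f0) fU fw) _ _.
- by move: dU rank_lt; have := rank_leq_col (U + f)%MS; lia.
- exact: leq_trans Urank (ltnW rank_lt).
- by exists j1; apply: submx_trans UUf.
Qed.

End Generated.

Lemma radial_of_reflmx_closed (X : set 'rV[R]_n) : (0 < k)%N ->
  (forall j, (2 <= \rank (V j))%N) -> span_connected ->
  (forall j e x, (e <= V j)%MS -> e != 0 -> X x -> X (x *m reflmx e)) -> radial X.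
Proof.
move=> k0 V_rank V_conn X_refl x y Xx yx; have [<- //|xy] := eqVneq x y.
pose P e := forall x, X x -> X (x *m reflmx e).
have P_reflmx e f : e != 0 -> f != 0 -> P e -> P f -> P (e *m reflmx f).
  by move=> e0 f0 Pe Pf z Xz; rewrite reflmx_conj // !mulmxA; apply/Pf/Pe/Pf.
have P_V j : good_on P (V j) by move=> e ej e0 z; apply: X_refl ej e0.
rewrite -(reflmx_swap (esym yx) xy); apply: (good_all V_rank V_conn P_reflmx P_V) => //.
by rewrite subr_eq0.
Qed.

End Connected.

Section Topology.
Variables (R : realType) (n : nat).
Local Notation V := 'rV[R^o]_n.
Implicit Types (A B : 'M[R]_n) (c : R).

Lemma continuous_mulmx_coord A j : continuous (fun y : V => (y *m A) 0 j : R^o).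
Proof.
under eq_fun do rewrite mxE.
apply: continuous_big => [|i _]; first exact: add_continuous.
move=> y; apply: continuousM; first exact: coord_continuous.
exact: (@cst_continuous _ _ (A i j : R^o) y).
Qed.

Lemma continuous_dotv_mulmx A B : continuous (fun y : V => dotv (y *m A) (y *m B) : R^o).
Proof.
under eq_fun do rewrite dotvE.
apply: continuous_big => [|i _]; first exact: add_continuous.
by move=> y; apply: continuousM; exact: continuous_mulmx_coord.
Qed.

Lemma continuous_dotv : continuous (fun y : V => dotv y y : R^o).
Proof.
under eq_fun do rewrite -[X in dotv X _]mulmx1 -[X in dotv _ X]mulmx1.
exact: continuous_dotv_mulmx.
Qed.

Lemma closed_dotv_le A c : closed [set y : V | dotv (y *m A) (y *m A) <= c].
Proof.
have := @preimage_closed _ _ (fun y : V => dotv (y *m A) (y *m A) : R^o) [set x | x <= c].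
by apply; [move=> y _; exact: continuous_dotv_mulmx | exact: closed_le].
Qed.

Lemma closed_dotv_eq A c : closed [set y : V | dotv (y *m A) (y *m A) = c].
Proof.
have := @preimage_closed _ _ (fun y : V => dotv (y *m A) (y *m A) : R^o) [set x | x = c].
by apply; [move=> y _; exact: continuous_dotv_mulmx | exact: closed_eq].
Qed.

Lemma open_dotv_lt A c : open [set y : V | dotv (y *m A) (y *m A) < c].
Proof.
have := @open_comp _ _ (fun y : V => dotv (y *m A) (y *m A) : R^o) [set x | x < c].
by apply; [move=> y _; exact: continuous_dotv_mulmx | exact: open_lt].
Qed.

End Topology.

Section ConvexBody.
Variables (R : realType) (n : nat).
Implicit Types (K : set 'rV[R]_n) (x y z : 'rV[R]_n).

Lemma convex_setP K : convex_set (K : set (convex_lmodType 'rV[R]_n)) <->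
  (forall x y a, 0 <= a <= 1 -> K x -> K y -> K (a *: x + (1 - a) *: y)).
Proof.
split=> [cK x y a /andP[a0 a1] Kx Ky|cK x y l].
  by have := cK x y (Itv01 a0 a1); rewrite !inE; apply.
by rewrite !inE => Kx Ky; apply: cK; rewrite ?ge0 ?le1.
Qed.

Lemma convex_body_neq0 K : (0 < n)%N -> convex_body K -> exists2 y, K y & y != 0.
Proof.
move=> n0 [_ [_ [x0 x0K]]]; have [x00|x00] := eqVneq (x0 : 'rV[R]_n) 0; last first.
  by exists x0; first exact: nbhs_singleton x0K.
move: x0K => /nbhs_ballP[e /= e0 x0K]; exists (x0 + const_mx (e / 2)).
  apply: x0K; rewrite -ball_normE /ball_ /= opprD addrA subrr add0r normrN.
  rewrite /Num.norm /= mx_normrE; apply: bigmax_lt => //= ij _.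
  by rewrite mxE ger0_norm; lra.
rewrite x00 add0r; apply/negP => /eqP/rowP/(_ (Ordinal n0)); rewrite !mxE.
by move/eqP; rewrite gt_eqF // divr_gt0.
Qed.

Lemma radial_convex_scale K z l : convex_set (K : set (convex_lmodType 'rV[R]_n)) ->
  radial K -> K z -> -1 <= l <= 1 -> K (l *: z).
Proof.
move=> /convex_setP cK rK Kz /andP[l_ge l_le].
have Knz : K (- z) by apply: rK Kz _; rewrite -scaleN1r dotvZZ sqrrN expr1n mul1r.
have a01 : 0 <= (1 + l) / 2 <= 1 by apply/andP; split; lra.
have := cK _ _ _ a01 Kz Knz.
by rewrite scalerN -scalerBl; congr K; congr (_ *: _); lra.
Qed.

Lemma radial_convex_body_ball K : (0 < n)%N -> convex_body K -> radial K ->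
  exists r : R, 0 < r /\ K = [set y | dotv y y <= r ^+ 2].
Proof.
move=> n0 Kbody rK; have [y1 Ky1 y10] := convex_body_neq0 n0 Kbody.
case: Kbody => Kcompact [Kconvex _].
have [c Kc cmax] := @compact_EVT_max _ R (fun y : 'rV[R^o]_n => dotv y y)
  (K : set 'rV[R^o]_n) (ex_intro _ y1 Ky1) Kcompact
  (continuous_subspaceT (@continuous_dotv R n)).
rewrite inE in Kc; have Kle y : K y -> dotv y y <= dotv c c.
  by move=> Ky; apply: cmax; rewrite inE.
have c_pos : 0 < dotv c c := lt_le_trans (dotv_gt0 y10) (Kle _ Ky1).
set r := Num.sqrt (dotv c c); have r0 : 0 < r by rewrite sqrtr_gt0.
exists r; split=> //; rewrite sqr_sqrtr ?(ltW c_pos) //.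
apply/seteqP; split=> y /=; first exact: Kle.
move=> yc; have [->|y0] := eqVneq y 0.
  by rewrite -(scale0r c); apply: radial_convex_scale Kconvex rK Kc _; rewrite lerN10 ler01.
set s := Num.sqrt (dotv y y); have s0 : 0 < s by rewrite sqrtr_gt0 dotv_gt0.
have sr : s <= r by rewrite /s /r ler_sqrt ?(ltW c_pos).
have -> : y = (s / r) *: ((r / s) *: y).
  by rewrite scalerA mulrA divfK ?gt_eqF // divff ?gt_eqF // scale1r.
apply: (radial_convex_scale Kconvex rK).
  apply: rK Kc _; rewrite dotvZZ expr_div_n !sqr_sqrtr ?dotv_ge0 // divfK //.
  by rewrite gt_eqF // dotv_gt0.
apply/andP; split; last by rewrite ler_pdivrMr ?mul1r.
by apply: le_trans (_ : 0 <= _); rewrite ?lerN10 ?divr_ge0 ?ltW.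
Qed.

End ConvexBody.

Lemma fixesM (R : realType) (n : nat) (Q1 Q2 H : 'M[R]_n) :
  fixes Q1 H -> fixes Q2 H -> fixes (Q1 *m Q2) H.
Proof. by move=> Q1H Q2H v vH; rewrite mulmxA Q1H ?Q2H. Qed.

Lemma rot_symmetric_rotation (R : realType) (n : nat) (H Q : 'M[R]_n) (K : set 'rV[R]_n) x :
  rot_symmetric H K -> rotation Q -> fixes Q H -> K x -> K (x *m Q).
Proof.
move=> Ksym [QQ _] QH Kx; have [h [v [hH vH xE]]] := perp_decomp H x; subst x.
have Q_iso a b : dotv (a *m Q) (b *m Q) = dotv a b by rewrite dotv_mulmx -mulmxA QQ mulmx1.
have vQH : (v *m Q <= perp H)%MS.
  by apply/perpP => w wH; rewrite -(QH w wH) Q_iso; move/perpP: vH; apply.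
rewrite mulmxDl QH //; apply: (Ksym h (h + v)); rewrite // ?(addrC h) ?addrK ?Q_iso //.
Qed.

Section OrthogonalProjection.
Variables (R : realType) (n : nat) (W : 'M[R]_n).
Implicit Types (y : 'rV[R]_n).

Definition orthproj := proj_mx W (perp W).

Lemma orthproj_sub y : (y *m orthproj <= W)%MS.
Proof. exact: proj_mx_sub. Qed.

Lemma orthproj_compl y : (y - y *m orthproj <= perp W)%MS.
Proof. by apply: proj_mx_compl_sub; apply/submx_full/addsmx_perp_full. Qed.

Lemma orthproj_id y : (y <= W)%MS -> y *m orthproj = y.
Proof. exact: proj_mx_id (capmx_perp W). Qed.

Lemma orthproj_0 y : (y <= perp W)%MS -> y *m orthproj = 0.
Proof. exact: proj_mx_0 (capmx_perp W). Qed.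

Lemma dotv_orthproj y : dotv y y =
  dotv (y *m orthproj) (y *m orthproj) + dotv (y - y *m orthproj) (y - y *m orthproj).
Proof.
rewrite -dotv_pyth ?(addrC (y *m _)) ?subrK // dotvC.
by move/perpP: (orthproj_compl y); apply; exact: orthproj_sub.
Qed.

Definition cylinder := [set y | dotv (y *m orthproj) (y *m orthproj) <= 1 /\
  dotv (y - y *m orthproj) (y - y *m orthproj) <= 1].

Lemma convex_body_cylinder : convex_body cylinder.
Proof.
have compl y : y - y *m orthproj = y *m (1%:M - orthproj) by rewrite mulmxBr mulmx1.
have cylE : (cylinder : set 'rV[R^o]_n) =
    [set y | dotv (y *m orthproj) (y *m orthproj) <= 1] `&`
    [set y | dotv (y *m (1%:M - orthproj)) (y *m (1%:M - orthproj)) <= 1].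
  by apply/seteqP; split=> y; rewrite /cylinder /= compl.
split; [|split].
- apply: bounded_closed_compact; last by rewrite cylE; apply: closedI; exact: closed_dotv_le.
  exists 2; split=> // M M2 y [y1 y2].
  have yy : dotv y y <= 2 by rewrite dotv_orthproj; lra.
  rewrite /Num.norm /= mx_normrE; apply: bigmax_le => //=; first lra.
  move=> [i0 i] _ /=; rewrite [i0]ord1.
  by have := sqr_coord_le_dotv y i; rewrite ler_norml => yi; apply/andP; split; nra.
- apply/convex_setP => x y a a01 [x1 x2] [y1 y2]; split.
    by rewrite mulmxDl -!scalemxAl; apply: dotv_conv_le1.
  rewrite mulmxDl opprD addrACA -!scalemxAl -!scalerBr.
  exact: dotv_conv_le1.
- exists 0; rewrite /interior.
  pose O := [set y : 'rV[R^o]_n | dotv (y *m orthproj) (y *m orthproj) < 1] `&`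
    [set y | dotv (y *m (1%:M - orthproj)) (y *m (1%:M - orthproj)) < 1].
  have O0 : O 0 by rewrite /O /= !mul0mx !dotv0l ltr01.
  have Oopen : open O by apply: openI; exact: open_dotv_lt.
  apply: (filterS _ (open_nbhs_nbhs (conj Oopen O0))).
  by move=> y [y1 y2]; split; rewrite ?compl ltW.
Qed.

Lemma cylinder_rot_symmetric (H : 'M[R]_n) : (perp H <= W)%MS \/ orthsp (perp H) W ->
  rot_symmetric H cylinder.
Proof.
move=> HW x y z xH yx zx yz; rewrite /cylinder /=.
have x_orth u : (u <= perp H)%MS -> dotv u x = 0.
  by move=> uH; move/perpP: uH; apply.
have pyth u : (u - x <= perp H)%MS -> dotv u u = dotv (u - x) (u - x) + dotv x x.
  by move=> ux; rewrite -dotv_pyth ?subrK // x_orth.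
have zy : dotv z z = dotv y y by rewrite (pyth z) // (pyth y) // yz.
have zyH : (z - y <= perp H)%MS.
  have -> : z - y = (z - x) - (y - x) by rewrite opprB addrA subrK.
  by rewrite addmx_sub ?eqmx_opp.
have zE : z = y + (z - y) by rewrite addrC subrK.
suff [-> ->] : dotv (z *m orthproj) (z *m orthproj) = dotv (y *m orthproj) (y *m orthproj) /\
    dotv (z - z *m orthproj) (z - z *m orthproj) = dotv (y - y *m orthproj) (y - y *m orthproj).
  by [].
have := dotv_orthproj y; rewrite -zy dotv_orthproj.
case: HW => [HW|/orthsp_sym/orthspE HW].
  have -> : z - z *m orthproj = y - y *m orthproj.
    by rewrite {1 2}zE mulmxDl (orthproj_id (submx_trans zyH HW)) opprD addrACA subrr addr0.
  by move/addIr ->.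
have -> : z *m orthproj = y *m orthproj.
  by rewrite zE mulmxDl (orthproj_0 (submx_trans zyH HW)) addr0.
by move/addrI ->.
Qed.

Lemma cylinder_not_ball r : W != 0 -> perp W != 0 -> cylinder <> [set y | dotv y y <= r ^+ 2].
Proof.
move=> W0 Wp0 cyl_ball.
have [w wW ww] := exists_unit_sub W0; have [z zW zz] := exists_unit_sub Wp0.
have wz : dotv w z = 0 by rewrite dotvC; move/perpP: zW; apply.
have : cylinder (w + z).
  rewrite /cylinder /= mulmxDl orthproj_id // orthproj_0 // addr0 (addrC w) addrK.
  by rewrite ww zz.
rewrite cyl_ball /= dotv_pyth // ww zz => two_le.
have : cylinder (Num.sqrt 2 *: w) by rewrite cyl_ball /= dotvZZ sqr_sqrtr // ww mulr1.
by rewrite /cylinder /= -scalemxAl orthproj_id // dotvZZ sqr_sqrtr // ww mulr1 => -[]; lra.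
Qed.

Definition sphere_perp := @sphere R n `&` [set y | (y <= perp W)%MS].

Lemma closed_sphere_perp : closed (sphere_perp : set 'rV[R^o]_n).
Proof.
have -> : (sphere_perp : set 'rV[R^o]_n) = [set y | dotv (y *m 1%:M) (y *m 1%:M) = 1] `&`
    [set y | dotv (y *m W^T) (y *m W^T) = 0].
  by apply/seteqP; split=> y; rewrite /sphere_perp /sphere /= /perp sub_kermx -dotv_eq0 mulmx1 =>
    -[-> /eqP].
by apply: closedI; exact: closed_dotv_eq.
Qed.

Lemma sphere_perp_neq0 : perp W != 0 -> sphere_perp !=set0.
Proof. by move=> /exists_unit_sub[z zW zz]; exists z. Qed.

Lemma sphere_perp_neq : W != 0 -> sphere_perp <> @sphere R n.
Proof.
move=> /exists_unit_sub[w wW ww] sph; have : sphere_perp w by rewrite sph.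
by case=> _ /perpP/(_ w wW); rewrite ww => /eqP; rewrite oner_eq0.
Qed.

Lemma sphere_perp_chord (H : 'M[R]_n) : (perp H <= W)%MS \/ orthsp (perp H) W ->
  forall x y, sphere_perp x -> (y - x <= perp H)%MS -> sphere y -> sphere_perp y.
Proof.
move=> HW x y [xx xW] yx yy; split=> //=.
case: HW => [HW|/orthsp_sym/orthspE HW]; last first.
  by rewrite -(subrK x y) addmx_sub // (submx_trans yx HW).
have x_orth : dotv x (y - x) = 0 by move/perpP: xW; apply; exact: submx_trans yx HW.
have [xx1 yy1] : dotv x x = 1 /\ dotv y y = 1 by [].
have := dotv_pyth x_orth; rewrite (addrC x) subrK xx1 yy1 => d0.
have : dotv (y - x) (y - x) == 0 by apply/eqP; lra.
by rewrite dotv_eq0 subr_eq0 => /eqP ->.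
Qed.

End OrthogonalProjection.

Section Theorem4p1.
Variables (R : realType) (n k : nat) (H : 'I_k -> 'M[R]_n).
Hypotheses (hk : (0 < k)%N)
  (hdim : forall j, (1 <= \rank (H j))%N /\ (\rank (H j) <= n - 2)%N).

Lemma perp_rank_ge2 j : (2 <= \rank (perp (H j)))%N.
Proof. by rewrite mxrank_perp; have := hdim j; lia. Qed.

Lemma perp_neq0 j : perp (H j) != 0.
Proof. by rewrite -mxrank_eq0 -lt0n; have := perp_rank_ge2 j; lia. Qed.

Definition sphere_saturation := forall E : set 'rV[R]_n,
  E !=set0 -> closed (E : set 'rV[R^o]_n) -> E `<=` @sphere R n ->
  (forall j x y, E x -> (y - x <= perp (H j))%MS -> @sphere R n y -> E y) -> E = @sphere R n.

Definition rotation_radial := forall F : set 'rV[R]_n, closed (F : set 'rV[R^o]_n) ->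
  (forall j Q x, rotation Q -> fixes Q (H j) -> F x -> F (x *m Q)) -> radial F.

Definition symmetric_bodies_round := forall K : set 'rV[R]_n, convex_body K ->
  (forall j, rot_symmetric (H j) K) -> exists r : R, 0 < r /\ K = [set y | dotv y y <= r ^+ 2].

Lemma saturation_of_connected : span_connected (fun j => perp (H j)) -> sphere_saturation.
Proof.
move=> conn E [x0 Ex0] _ Esph Echord; apply/seteqP; split=> // y yS.
have Erad : radial E.
  apply: (radial_of_reflmx_closed hk perp_rank_ge2 conn) => j e x ej e0 Ex.
  apply: (Echord j x) => //; last by rewrite /sphere /= dotv_reflmx //; apply: Esph.
  by rewrite mul_reflmx addrAC subrr add0r -scaleNr scalemx_sub.
by apply: (Erad _ _ Ex0); rewrite [dotv y y]yS [dotv x0 x0](Esph _ Ex0).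
Qed.

(* A reflection in [e] orthogonal to [H] agrees at [x] with the rotation [s_b s_e],
   where [b] is orthogonal to both [H] and [x]. *)
Lemma radial_of_connected : span_connected (fun j => perp (H j)) -> rotation_radial.
Proof.
move=> conn F _ Frot; apply: (radial_of_reflmx_closed hk perp_rank_ge2 conn).
move=> j e x ej e0 Fx; have [b [bj b0 bx]] := exists_sub_orth x (perp_rank_ge2 j).
rewrite -[x in x *m _](@reflmx_orth _ _ x b) ?(dotvC x) // -mulmxA.
apply: Frot Fx; first exact: rotation_reflmxM.
exact: fixesM (fixes_reflmx bj) (fixes_reflmx ej).
Qed.

Lemma round_of_radial : rotation_radial -> symmetric_bodies_round.
Proof.
move=> rad K Kbody Ksym.
have n0 : (0 < n)%N by have := hdim (Ordinal hk); lia.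
apply: (radial_convex_body_ball n0 Kbody); apply: rad.
  by apply: compact_closed; [exact: norm_hausdorff | case: Kbody].
by move=> j Q x; apply: rot_symmetric_rotation.
Qed.

Lemma connected_of_saturation : sphere_saturation -> span_connected (fun j => perp (H j)).
Proof.
move=> sat; apply: contrapT => /(not_span_connected_split hk perp_neq0)[W [W0 Wp0 HW]].
apply: (sphere_perp_neq W0); apply: sat.
- exact: sphere_perp_neq0.
- exact: closed_sphere_perp.
- by move=> y [].
- by move=> j; apply: sphere_perp_chord.
Qed.

Lemma connected_of_round : symmetric_bodies_round -> span_connected (fun j => perp (H j)).
Proof.
move=> round; apply: contrapT => /(not_span_connected_split hk perp_neq0)[W [W0 Wp0 HW]].
have [r [_ cyl_ball]] :=
  round _ (convex_body_cylinder W) (fun j => cylinder_rot_symmetric (HW j)).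
exact: cylinder_not_ball W0 Wp0 cyl_ball.
Qed.

End Theorem4p1.

Theorem theorem4p1 (R : realType) (n k : nat) (H : 'I_k -> 'M[R]_n)
  (hk : (0 < k)%N)
  (hdim : forall j, (1 <= \rank (H j))%N /\ (\rank (H j) <= n - 2)%N) :
  [<->
   (* (i) *)
   row_full (\sum_j perp (H j))%MS /\
   ~ (exists A : {set 'I_k}, A != finset.set0 /\ ~: A != finset.set0 /\
        forall i j, i \in A -> j \notin A -> orthsp (perp (H i)) (perp (H j)));
   (* (ii) *)
   (forall E : set 'rV[R]_n, E !=set0 -> closed (E : set 'rV[R^o]_n) -> E `<=` @sphere R n ->
      (forall j x y, E x -> (y - x <= perp (H j))%MS -> @sphere R n y -> E y) ->
      E = @sphere R n);
   (* (iii) *)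
   (forall F : set 'rV[R]_n, closed (F : set 'rV[R^o]_n) ->
      (forall j Q x, rotation Q -> fixes Q (H j) -> F x -> F (x *m Q)) ->
      forall x y, F x -> dotv y y = dotv x x -> F y);
   (* (iv) *)
   (forall K : set 'rV[R]_n, convex_body K ->
      (forall j, rot_symmetric (H j) K) ->
      exists r : R, 0 < r /\ K = [set y | dotv y y <= r ^+ 2])].
Proof.
tfae.
- exact: saturation_of_connected hk hdim.
- by move/(connected_of_saturation hk hdim); exact: radial_of_connected hk hdim.
- exact: round_of_radial hk hdim.
- exact: connected_of_round hk hdim.
Qed.
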